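(* Let $\langle [n],\{v_a\}_{a\in[n]}\rangle$ be a cake-division instance, let $\alpha\ge1$, and let $\mathcal{I}$ be an $\alpha$-approximately envy-free allocation. Then for every $\rho\in(0,1]$ and every allocation $\mathcal{I}^*$, $$\mathrm{M}_\rho(\mathcal{I}^* )\ \le\ 2\alpha\,2^{1/\rho}\,n^{\frac{\rho}{\rho+1}}\ \mathrm{M}_\rho(\mathcal{I}).$$
   Context: The cake is $[0,1]$. Each agent's valuation $v_a$ assigns a value $v_a(I)\ge0$ to every interval $I\subseteq[0,1]$ and is normalized ($v_a([0,1])=1$), divisible (for every interval $[x,y]$ and $\lambda\in[0,1]$ there is $z\in[x,y]$ with $v_a([x,z])=\lambda v_a([x,y])$), and sigma additive ($v_a(I\cup J)=v_a(I)+v_a(J)$ for disjoint intervals). Intervals meeting only at an endpoint are regarded as disjoint. An allocation is a tuple $\mathcal{I}=\{I_1,\dots,I_n\}$ of pairwise-disjoint (possibly empty) intervals with $\bigcup_aI_a=[0,1]$, $I_a$ going to agent $a$. For $\alpha\ge1$, $\mathcal{I}$ is $\alpha$-approximately envy-free if $v_a(I_a)\ge\frac1\alpha v_a(I_b)$ for all $a,b$. The $\rho$-mean welfare is $\mathrm{M}_\rho(\mathcal{I})=\left(\frac1n\sum_{a=1}^n[v_a(I_a)]^\rho\right)^{1/\rho}$. *)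

From Stdlib Require Import Reals Lra List.
Open Scope R_scope.

(* A valuation on the cake [0,1]: v x y is the value of the interval [x,y]
   (for 0 <= x <= y <= 1).  Endpoints carry no mass (v x x = 0 follows
   from additivity), so closed/open intervals are identified. *)
Definition is_valuation (v : R -> R -> R) : Prop :=
  (forall x y, 0 <= x -> x <= y -> y <= 1 -> 0 <= v x y) /\
  v 0 1 = 1 /\
  (forall x y lam, 0 <= x -> x <= y -> y <= 1 -> 0 <= lam <= 1 ->
     exists z, x <= z <= y /\ v x z = lam * v x y) /\
  (forall x y z, 0 <= x -> x <= y -> y <= z -> z <= 1 ->
     v x z = v x y + v y z).

(* An interval is given by its endpoints (l, r) with 0 <= l <= r <= 1;
   an empty piece is represented by a degenerate interval [x,x]. *)
Definition is_interval (I : R * R) : Prop :=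
  0 <= fst I /\ fst I <= snd I /\ snd I <= 1.

Definition is_allocation (n : nat) (I : nat -> R * R) : Prop :=
  (forall a, (a < n)%nat -> is_interval (I a)) /\
  (forall a b, (a < n)%nat -> (b < n)%nat -> a <> b ->
     snd (I a) <= fst (I b) \/ snd (I b) <= fst (I a)) /\
  (forall x, 0 <= x <= 1 -> exists a, (a < n)%nat /\ fst (I a) <= x <= snd (I a)).

Definition val (v : nat -> R -> R -> R) (a : nat) (J : R * R) : R :=
  v a (fst J) (snd J).

Definition alpha_EF (n : nat) (v : nat -> R -> R -> R) (alpha : R)
  (I : nat -> R * R) : Prop :=
  forall a b, (a < n)%nat -> (b < n)%nat -> val v a (I a) >= / alpha * val v a (I b).

Definition rpow (x y : R) : R := if Req_EM_T x 0 then 0 else Rpower x y.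

Definition Rsum (n : nat) (f : nat -> R) : R :=
  fold_right Rplus 0 (map f (seq 0 n)).

Definition Mrho (n : nat) (v : nat -> R -> R -> R) (rho : R) (I : nat -> R * R) : R :=
  rpow (/ INR n * Rsum n (fun a => rpow (val v a (I a)) rho)) (/ rho).

(* Write Y_a = v_a(I*_a), X_a = v_a(I_a) and let K_a be the number of pieces
   I_b that overlap I*_a in an interval of positive length.
   The rest is a real inequality (welfare_mean_bound): with the threshold
   T = 2^(1/(rho+1)) n^(rho/(rho+1)), agents with K_a <= T satisfy
   Y_a^rho <= (alpha T X_a)^rho and the others Y_a^rho <= 1 <= K_a / T;
   summing, and using sum_a K_a <= 2n <= 2 (n alpha)^rho sum_a X_a^rho together
   with T^(rho+1) = 2 n^rho, gives sum Y^rho <= 2 (alpha T)^rho sum X^rho; the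
   theorem follows by taking (1/rho)-th roots, since T <= 2 n^(rho/(rho+1)). *)

From Stdlib Require Import Reals Lra Lia List.
Open Scope R_scope.

Definition lsum (f : nat -> R) (L : list nat) : R := fold_right Rplus 0 (map f L).

Lemma lsum_nonneg f L : (forall b, In b L -> 0 <= f b) -> 0 <= lsum f L.
Proof.
  induction L as [|c L IH]; intros H; unfold lsum in *; simpl; [lra|].
  assert (0 <= f c) by (apply H; left; auto).
  assert (0 <= fold_right Rplus 0 (map f L)) by (apply IH; intros; apply H; right; auto).
  lra.
Qed.

Lemma lsum_le f g L : (forall b, In b L -> f b <= g b) -> lsum f L <= lsum g L.
Proof.
  induction L as [|c L IH]; intros H; unfold lsum in *; simpl; [lra|].
  assert (f c <= g c) by (apply H; left; auto).
  assert (fold_right Rplus 0 (map f L) <= fold_right Rplus 0 (map g L))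
    by (apply IH; intros; apply H; right; auto).
  lra.
Qed.

Lemma lsum_remove_le f b0 L : (forall b, In b L -> 0 <= f b) ->
  lsum f (remove Nat.eq_dec b0 L) <= lsum f L.
Proof.
  induction L as [|c L IH]; intros H; unfold lsum in *; simpl; [lra|].
  assert (0 <= f c) by (apply H; left; auto).
  assert (fold_right Rplus 0 (map f (remove Nat.eq_dec b0 L)) <= fold_right Rplus 0 (map f L))
    by (apply IH; intros; apply H; right; auto).
  destruct (Nat.eq_dec b0 c); simpl; lra.
Qed.

Lemma lsum_remove f b0 L : (forall b, In b L -> 0 <= f b) -> In b0 L ->
  f b0 + lsum f (remove Nat.eq_dec b0 L) <= lsum f L.
Proof.
  induction L as [|c L IH]; intros H Hin; [destruct Hin|].
  assert (0 <= f c) by (apply H; left; auto).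
  simpl; destruct (Nat.eq_dec b0 c) as [->|Hne].
  - assert (lsum f (remove Nat.eq_dec c L) <= lsum f L)
      by (apply lsum_remove_le; intros; apply H; right; auto).
    unfold lsum in *; simpl; lra.
  - destruct Hin as [Hin|Hin]; [congruence|].
    assert (f b0 + lsum f (remove Nat.eq_dec b0 L) <= lsum f L)
      by (apply IH; auto; intros; apply H; right; auto).
    unfold lsum in *; simpl; lra.
Qed.

Lemma Rsum_S n f : Rsum (S n) f = Rsum n f + f n.
Proof.
  unfold Rsum. rewrite seq_S, map_app, fold_right_app. simpl.
  generalize (map f (seq 0 n)). induction l; simpl; lra.
Qed.

Lemma Rsum_le n f g : (forall a, (a < n)%nat -> f a <= g a) -> Rsum n f <= Rsum n g.
Proof.
  induction n as [|n IH]; intros H; [unfold Rsum; simpl; lra|].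
  rewrite !Rsum_S. pose proof (H n ltac:(lia)).
  assert (Rsum n f <= Rsum n g) by (apply IH; intros; apply H; lia). lra.
Qed.

Lemma Rsum_ext n f g : (forall a, (a < n)%nat -> f a = g a) -> Rsum n f = Rsum n g.
Proof.
  intros H; apply Rle_antisym; apply Rsum_le; intros a Ha; rewrite H; auto; lra.
Qed.

Lemma Rsum_plus n f g : Rsum n (fun a => f a + g a) = Rsum n f + Rsum n g.
Proof. induction n; [unfold Rsum; simpl; lra|]. rewrite !Rsum_S, IHn. lra. Qed.

Lemma Rsum_scal n f c : Rsum n (fun a => f a * c) = Rsum n f * c.
Proof. induction n; [unfold Rsum; simpl; lra|]. rewrite !Rsum_S, IHn. lra. Qed.

Lemma Rsum_const n c : Rsum n (fun _ => c) = INR n * c.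
Proof. induction n; [unfold Rsum; simpl; lra|]. rewrite !Rsum_S, IHn, S_INR. lra. Qed.

Lemma Rsum_nonneg n f : (forall a, (a < n)%nat -> 0 <= f a) -> 0 <= Rsum n f.
Proof.
  intros H. replace 0 with (Rsum n (fun _ => 0)) at 1 by (rewrite Rsum_const; ring).
  apply Rsum_le; auto.
Qed.

Lemma Rsum_swap n m (f : nat -> nat -> R) :
  Rsum n (fun a => Rsum m (fun b => f a b)) = Rsum m (fun b => Rsum n (fun a => f a b)).
Proof.
  induction n as [|n IH].
  - transitivity (Rsum m (fun _ => 0)); [rewrite Rsum_const; unfold Rsum; simpl; ring|].
    apply Rsum_ext; intros; reflexivity.
  - rewrite Rsum_S, IH, <- Rsum_plus. apply Rsum_ext; intros; rewrite Rsum_S; auto.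
Qed.

Lemma Rsum_at_most_one n f : (forall b, (b < n)%nat -> f b = 0 \/ f b = 1) ->
  (forall b b', (b < n)%nat -> (b' < n)%nat -> f b = 1 -> f b' = 1 -> b = b') ->
  Rsum n f <= 1.
Proof.
  induction n as [|n IH]; intros H01 Huniq; [unfold Rsum; simpl; lra|].
  rewrite Rsum_S. destruct (H01 n ltac:(lia)) as [Hn|Hn].
  - assert (Rsum n f <= 1) by (apply IH; intros; [apply H01 | apply Huniq]; auto; lia).
    lra.
  - assert (Hzero : Rsum n f = Rsum n (fun _ => 0)).
    { apply Rsum_ext. intros b Hb. destruct (H01 b ltac:(lia)) as [|Hb1]; auto.
      specialize (Huniq b n ltac:(lia) ltac:(lia) Hb1 Hn). lia. }
    rewrite Hzero, Rsum_const. lra.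
Qed.

Section Valuation.
Variable w : R -> R -> R.
Hypothesis Hw : is_valuation w.

Lemma w_nonneg x y : 0 <= x -> x <= y -> y <= 1 -> 0 <= w x y.
Proof. destruct Hw as [H _]; auto. Qed.

Lemma w_add x y z : 0 <= x -> x <= y -> y <= z -> z <= 1 -> w x z = w x y + w y z.
Proof. destruct Hw as [_ [_ [_ H]]]; auto. Qed.

Lemma w_point x : 0 <= x <= 1 -> w x x = 0.
Proof. intros. pose proof (w_add x x x). lra. Qed.

Lemma w_mono x y x' y' : 0 <= x -> x <= x' -> x' <= y' -> y' <= y -> y <= 1 ->
  w x' y' <= w x y.
Proof.
  intros.
  rewrite (w_add x x' y), (w_add x' y' y) by lra.
  pose proof (w_nonneg x x'). pose proof (w_nonneg y' y). lra.
Qed.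

Lemma w_le_1 J : is_interval J -> 0 <= w (fst J) (snd J) <= 1.
Proof.
  intros [H0 [H1 H2]]. split; [apply w_nonneg; auto|].
  destruct Hw as [_ [Hw1 _]]. rewrite <- Hw1. apply w_mono; lra.
Qed.

Definition clip (l r : R) (J : R * R) : R :=
  if Rle_dec (Rmax l (fst J)) (Rmin r (snd J))
  then w (Rmax l (fst J)) (Rmin r (snd J)) else 0.

Lemma clip_nonneg l r J : 0 <= l -> r <= 1 -> 0 <= clip l r J.
Proof.
  intros Hl Hr. unfold clip. destruct Rle_dec; [|lra].
  pose proof (Rmax_l l (fst J)). pose proof (Rmin_l r (snd J)).
  apply w_nonneg; lra.
Qed.

Lemma clip_mono_r l r r' J : 0 <= l -> r' <= r -> r <= 1 -> clip l r' J <= clip l r J.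
Proof.
  intros Hl Hrr Hr. unfold clip.
  pose proof (Rmax_l l (fst J)). pose proof (Rmin_l r (snd J)).
  pose proof (Rmin_l r' (snd J)).
  assert (Rmin r' (snd J) <= Rmin r (snd J)) by (unfold Rmin; repeat destruct Rle_dec; lra).
  destruct (Rle_dec (Rmax l (fst J)) (Rmin r' (snd J))); (destruct Rle_dec; [|lra]).
  - apply w_mono; lra.
  - apply w_nonneg; lra.
Qed.

Lemma clip_le_piece l r J : 0 <= l -> r <= 1 -> is_interval J -> clip l r J <= w (fst J) (snd J).
Proof.
  intros Hl Hr [HJ1 [HJ2 HJ3]]. unfold clip.
  pose proof (Rmax_l l (fst J)). pose proof (Rmin_l r (snd J)).
  pose proof (Rmax_r l (fst J)). pose proof (Rmin_r r (snd J)).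
  destruct Rle_dec; [apply w_mono | apply w_nonneg]; lra.
Qed.

Lemma clip_no_overlap l r J : 0 <= l -> r <= 1 ->
  ~ (Rmax l (fst J) < Rmin r (snd J)) -> clip l r J = 0.
Proof.
  intros Hl Hr H. unfold clip.
  pose proof (Rmax_l l (fst J)). pose proof (Rmin_l r (snd J)).
  destruct Rle_dec; auto.
  replace (Rmin r (snd J)) with (Rmax l (fst J)) by lra. apply w_point. lra.
Qed.

End Valuation.

Definition inJ (J : R * R) x := fst J <= x <= snd J.

Definition covers (J : nat -> R * R) (L : list nat) (l r : R) : Prop :=
  forall x, l <= x <= r -> exists b, In b L /\ inJ (J b) x.

(* A finite union of closed intervals is closed: covering [l, c) covers c. *)
Lemma cover_closed (J : nat -> R * R) L : forall l c, l < c ->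
  (forall x, l <= x < c -> exists b, In b L /\ inJ (J b) x) ->
  exists b, In b L /\ inJ (J b) c.
Proof.
  induction L as [|b L IH]; intros l c Hlc H.
  - destruct (H l) as [b [[] _]]. lra.
  - destruct (Rle_dec (fst (J b)) c) as [H1|H1];
    [destruct (Rle_dec c (snd (J b))) as [H2|H2]|].
    + exists b; split; [left; auto | split; auto].
    + (* J b lies left of c: the tail covers an interval ending at c *)
      assert (Hm : Rmax l (snd (J b)) < c) by (unfold Rmax; destruct Rle_dec; lra).
      destruct (IH ((Rmax l (snd (J b)) + c) / 2) c) as [b' [Hb' Hc]]; [lra| |].
      * intros x Hx. destruct (H x) as [b' [[<-|Hb'] Hx']].
        -- pose proof (Rmax_l l (snd (J b))); lra.
        -- pose proof (Rmax_r l (snd (J b))). unfold inJ in Hx'. lra.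
        -- exists b'; auto.
      * exists b'; split; [right|]; auto.
    + (* J b lies right of c: the tail covers [l, c) *)
      destruct (IH l c) as [b' [Hb' Hc]]; [lra| |].
      * intros x Hx. destruct (H x) as [b' [[<-|Hb'] Hx']]; [| |exists b'; auto].
        -- lra.
        -- unfold inJ in Hx'; lra.
      * exists b'; split; [right|]; auto.
Qed.

Lemma covers_remove J L b0 l r : covers J L l r -> inJ (J b0) r -> l < fst (J b0) ->
  covers J (remove Nat.eq_dec b0 L) l (fst (J b0)).
Proof.
  intros Hc Hr0 Hl0.
  assert (Hopen : forall x, l <= x < fst (J b0) ->
                  exists b, In b (remove Nat.eq_dec b0 L) /\ inJ (J b) x).
  { intros x Hx. unfold inJ in Hr0. destruct (Hc x) as [b [Hb Hbx]]; [lra|].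
    exists b; split; auto. apply in_in_remove; auto.
    intros ->. unfold inJ in Hbx. lra. }
  intros x Hx. destruct (Rlt_le_dec x (fst (J b0))); [apply Hopen; lra|].
  replace x with (fst (J b0)) by lra. apply (cover_closed J _ l); auto.
Qed.

(* Induction on
   the number of intervals: the interval containing r is split off. *)
Lemma cover_subadditive w (Hw : is_valuation w) (J : nat -> R * R) : forall k L,
  (length L <= k)%nat -> (forall b, In b L -> is_interval (J b)) ->
  forall l r, 0 <= l -> l <= r -> r <= 1 -> covers J L l r ->
  w l r <= lsum (fun b => clip w l r (J b)) L.
Proof.
  induction k as [|k IH]; intros L HL HJ l r H0 H1 H2 Hc.
  - destruct (Hc r) as [b [Hb _]]; [lra|]. destruct L; simpl in *; [destruct Hb|lia].
  - destruct (Hc r) as [b0 [Hb0 Hr0]]; [lra|].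
    assert (Hnn : forall r', r' <= 1 -> forall b, In b L -> 0 <= clip w l r' (J b))
      by (intros; apply clip_nonneg; auto).
    pose proof (lsum_remove (fun b => clip w l r (J b)) b0 L (Hnn r H2) Hb0) as Hsplit.
    assert (Hrest : 0 <= lsum (fun b => clip w l r (J b)) (remove Nat.eq_dec b0 L)).
    { apply lsum_nonneg. intros b Hb. apply in_remove in Hb. apply Hnn; tauto. }
    unfold inJ in Hr0.
    destruct (Rle_dec (fst (J b0)) l) as [Hle|Hlt].
    + (* J b0 contains the whole window *)
      assert (clip w l r (J b0) = w l r).
      { unfold clip. rewrite Rmax_left, Rmin_left by lra. destruct Rle_dec; [auto|lra]. }
      lra.
    + (* J b0 contains [fst (J b0), r]; the other intervals cover the rest *)
      assert (Hleft : w l (fst (J b0)) <= lsum (fun b => clip w l (fst (J b0)) (J b)) (remove Nat.eq_dec b0 L)).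
      { apply IH; try lra.
        - pose proof (remove_length_lt Nat.eq_dec L b0 Hb0). lia.
        - intros b Hb. apply in_remove in Hb. apply HJ; tauto.
        - apply covers_remove with r; [auto | exact Hr0 | lra]. }
      assert (lsum (fun b => clip w l (fst (J b0)) (J b)) (remove Nat.eq_dec b0 L) <=
              lsum (fun b => clip w l r (J b)) (remove Nat.eq_dec b0 L))
        by (apply lsum_le; intros; apply clip_mono_r; auto; lra).
      assert (clip w l r (J b0) = w (fst (J b0)) r).
      { unfold clip. rewrite Rmax_right, Rmin_left by lra. destruct Rle_dec; [auto|lra]. }
      rewrite (w_add w Hw l (fst (J b0)) r) by lra. lra.
Qed.

Lemma cover_allocation w n I : is_valuation w -> is_allocation n I ->
  forall l r, 0 <= l -> l <= r -> r <= 1 ->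
  w l r <= Rsum n (fun b => clip w l r (I b)).
Proof.
  intros Hw [HI [_ HC]] l r H0 H1 H2.
  apply (cover_subadditive w Hw I n); auto.
  - rewrite length_seq; lia.
  - intros b Hb. apply in_seq in Hb. apply HI; lia.
  - intros x Hx. destruct (HC x) as [b [Hb Hx']]; [lra|]. exists b; split; auto.
    apply in_seq; lia.
Qed.

Definition overlap (J K : R * R) : R :=
  if Rlt_dec (Rmax (fst J) (fst K)) (Rmin (snd J) (snd K)) then 1 else 0.

Lemma overlap_sym J K : overlap J K = overlap K J.
Proof. unfold overlap. rewrite Rmax_comm, Rmin_comm. reflexivity. Qed.

Definition overlap_ending (K J : R * R) : R :=
  if Rle_dec (snd K) (snd J) then overlap K J else 0.

(* Each overlapping pair is charged to the interval that ends first. *)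
Lemma overlap_charge K J : overlap K J <= overlap_ending K J + overlap_ending J K.
Proof.
  unfold overlap_ending. rewrite (overlap_sym J K).
  unfold overlap; repeat destruct Rle_dec; destruct Rlt_dec; lra.
Qed.

Lemma overlap_ending_at_most_one n (J : nat -> R * R) K :
  (forall b b', (b < n)%nat -> (b' < n)%nat -> b <> b' ->
     snd (J b) <= fst (J b') \/ snd (J b') <= fst (J b)) ->
  Rsum n (fun b => overlap_ending K (J b)) <= 1.
Proof.
  intros Hdisj. apply Rsum_at_most_one.
  - intros b _. unfold overlap_ending, overlap.
    repeat destruct Rle_dec; try destruct Rlt_dec; auto.
  - intros b b' Hb Hb'. unfold overlap_ending, overlap.
    destruct (Rle_dec _ _) as [e1|]; [destruct (Rlt_dec _ _) as [o1|]|]; try lra; intros _.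
    destruct (Rle_dec _ _) as [e2|]; [destruct (Rlt_dec _ _) as [o2|]|]; try lra; intros _.
    destruct (Nat.eq_dec b b') as [|Hne]; auto.
    pose proof (Rmax_r (fst K) (fst (J b))). pose proof (Rmin_l (snd K) (snd (J b))).
    pose proof (Rmax_r (fst K) (fst (J b'))). pose proof (Rmin_l (snd K) (snd (J b'))).
    destruct (Hdisj b b' Hb Hb' Hne); lra.
Qed.

Lemma overlap_count n (Is I : nat -> R * R) :
  is_allocation n Is -> is_allocation n I ->
  Rsum n (fun a => Rsum n (fun b => overlap (Is a) (I b))) <= 2 * INR n.
Proof.
  intros [_ [Ds _]] [_ [D _]].
  assert (Hsplit : Rsum n (fun a => Rsum n (fun b => overlap (Is a) (I b))) <=
     Rsum n (fun a => Rsum n (fun b => overlap_ending (Is a) (I b))) +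
     Rsum n (fun b => Rsum n (fun a => overlap_ending (I b) (Is a)))).
  { rewrite <- (Rsum_swap n n (fun a b => overlap_ending (I b) (Is a))), <- Rsum_plus.
    apply Rsum_le; intros a _. rewrite <- Rsum_plus.
    apply Rsum_le; intros b _. apply overlap_charge. }
  assert (Rsum n (fun a => Rsum n (fun b => overlap_ending (Is a) (I b))) <= Rsum n (fun _ => 1))
    by (apply Rsum_le; intros; apply overlap_ending_at_most_one; auto).
  assert (Rsum n (fun b => Rsum n (fun a => overlap_ending (I b) (Is a))) <= Rsum n (fun _ => 1))
    by (apply Rsum_le; intros; apply overlap_ending_at_most_one; auto).
  rewrite Rsum_const in *. lra.
Qed.

Lemma EF_le n v alpha I a b : 0 < alpha -> alpha_EF n v alpha I -> (a < n)%nat -> (b < n)%nat ->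
  val v a (I b) <= alpha * val v a (I a).
Proof.
  intros Ha H Han Hbn. specialize (H a b Han Hbn).
  apply Rge_le, (Rmult_le_compat_l alpha) in H; [|lra].
  rewrite <- Rmult_assoc, Rinv_r in H by lra. lra.
Qed.

Lemma EF_lower_bound n v alpha I a : (forall a, (a < n)%nat -> is_valuation (v a)) ->
  0 < alpha -> is_allocation n I -> alpha_EF n v alpha I -> (a < n)%nat ->
  1 <= INR n * (alpha * val v a (I a)).
Proof.
  intros Hv Ha HI HEF Han. pose proof (Hv a Han) as Hw.
  assert (Hwhole : v a 0 1 = 1) by (destruct Hw as [_ [H _]]; auto).
  pose proof (cover_allocation (v a) n I Hw HI 0 1 ltac:(lra) ltac:(lra) ltac:(lra)) as H.
  rewrite <- Rsum_const. rewrite Hwhole in H. eapply Rle_trans; [apply H|].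
  apply Rsum_le. intros b Hb. eapply Rle_trans; [apply clip_le_piece; auto; try lra|].
  - destruct HI as [HI _]; apply HI; auto.
  - apply (EF_le n v alpha I a b); auto.
Qed.

Lemma EF_overlap_bound n v alpha I Js a : (forall a, (a < n)%nat -> is_valuation (v a)) ->
  0 < alpha -> is_allocation n I -> is_allocation n Js -> alpha_EF n v alpha I -> (a < n)%nat ->
  val v a (Js a) <= Rsum n (fun b => overlap (Js a) (I b)) * (alpha * val v a (I a)).
Proof.
  intros Hv Ha HI HJs HEF Han. pose proof (Hv a Han) as Hw.
  destruct (proj1 HJs a Han) as [H0 [H1 H2]].
  pose proof (cover_allocation (v a) n I Hw HI (fst (Js a)) (snd (Js a)) H0 H1 H2) as H.
  unfold val at 1. eapply Rle_trans; [apply H|]. rewrite <- Rsum_scal.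
  apply Rsum_le. intros b Hb. unfold overlap. destruct Rlt_dec as [o|o].
  - rewrite Rmult_1_l. eapply Rle_trans; [apply clip_le_piece; auto; try lra|].
    + destruct HI as [HI _]; apply HI; auto.
    + apply (EF_le n v alpha I a b); auto.
  - rewrite clip_no_overlap; auto; lra.
Qed.

Lemma Rpower_pos x y : 0 < Rpower x y.
Proof. unfold Rpower; apply exp_pos. Qed.

Lemma Rpower_one c : Rpower 1 c = 1.
Proof. unfold Rpower. rewrite ln_1, Rmult_0_r, exp_0. reflexivity. Qed.

Lemma Rpower_root x p : 0 < x -> p <> 0 -> Rpower (Rpower x p) (/ p) = x.
Proof. intros. rewrite Rpower_mult, Rinv_r, Rpower_1; auto. Qed.

Lemma rpow_of_pos x y : 0 < x -> rpow x y = Rpower x y.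
Proof. intros; unfold rpow; destruct Req_EM_T; [lra|auto]. Qed.

Lemma rpow_nonneg x y : 0 <= rpow x y.
Proof. unfold rpow; destruct Req_EM_T; [lra|]. left; apply Rpower_pos. Qed.

Lemma rpow_le x y c : 0 <= x <= y -> 0 <= c -> rpow x c <= rpow y c.
Proof.
  intros Hx Hc. destruct (Req_EM_T x 0) as [->|Hne].
  - unfold rpow at 1; destruct Req_EM_T; [|lra]. apply rpow_nonneg.
  - rewrite !rpow_of_pos by lra. apply Rle_Rpower_l; lra.
Qed.

Lemma rpow_le_scaled A s B c : 0 <= A -> A <= s * B -> 0 < s -> 0 < B -> 0 <= c ->
  rpow A c <= Rpower s c * Rpower B c.
Proof.
  intros. rewrite Rpower_mult_distr, <- rpow_of_pos by nra. apply rpow_le; nra.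
Qed.

Lemma threshold_split alpha T p x y k :
  0 < alpha -> 0 < T -> 0 <= p -> 0 < x -> 0 <= y <= 1 -> 0 <= k ->
  y <= k * (alpha * x) ->
  rpow y p <= Rpower (alpha * T) p * Rpower x p + k / T.
Proof.
  intros Ha HT Hp Hx Hy Hk Hyk.
  assert (Hkt : 0 <= k / T) by (unfold Rdiv; apply Rmult_le_pos; [|apply Rlt_le, Rinv_0_lt_compat]; lra).
  pose proof (Rpower_pos (alpha * T) p). pose proof (Rpower_pos x p).
  destruct (Rle_lt_dec k T) as [HkT|HkT].
  - assert (HaT : 0 < alpha * T) by nra. assert (HaTx : 0 < alpha * T * x) by nra.
    assert (y <= alpha * T * x) by (assert (0 < alpha * x) by nra; nra).
    eapply Rle_trans; [apply (rpow_le _ (alpha * T * x)); lra|].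
    rewrite rpow_of_pos, <- (Rpower_mult_distr (alpha * T) x p) by lra. lra.
  - assert (1 <= k / T).
    { apply (Rmult_le_reg_r T); [lra|]. unfold Rdiv.
      rewrite Rmult_assoc, Rinv_l by lra. lra. }
    eapply Rle_trans; [apply (rpow_le _ 1); lra|].
    rewrite rpow_of_pos, Rpower_one by lra. nra.
Qed.

Lemma Rsum_rpow_lower n c p (X : nat -> R) : 0 < c -> 0 <= p ->
  (forall a, (a < n)%nat -> 1 <= c * X a) ->
  INR n <= Rpower c p * Rsum n (fun a => rpow (X a) p).
Proof.
  intros Hc Hp HX.
  replace (INR n) with (Rsum n (fun _ => 1)) by (rewrite Rsum_const; ring).
  rewrite Rmult_comm, <- Rsum_scal. apply Rsum_le; intros a Ha.
  specialize (HX a Ha). assert (0 < X a) by nra.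
  rewrite rpow_of_pos, Rpower_mult_distr by lra.
  rewrite <- (Rpower_one p). apply Rle_Rpower_l; nra.
Qed.

(* The threshold T = 2^(1/(p+1)) N^(p/(p+1)), chosen so that T^(p+1) = 2 N^p. *)
Definition threshold (N p : R) : R := Rpower 2 (/ (p + 1)) * Rpower N (p / (p + 1)).

Lemma threshold_pos N p : 0 < threshold N p.
Proof. apply Rmult_lt_0_compat; apply Rpower_pos. Qed.

Lemma threshold_power N p : 0 < N -> 0 < p ->
  Rpower (threshold N p) p * threshold N p = 2 * Rpower N p.
Proof.
  intros HN Hp. pose proof (threshold_pos N p).
  rewrite <- (Rpower_1 (threshold N p)) at 2 by auto. rewrite <- Rpower_plus.
  unfold threshold. rewrite <- Rpower_mult_distr by apply Rpower_pos.
  rewrite !Rpower_mult.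
  replace (/ (p + 1) * (p + 1)) with 1 by (field; lra).
  replace (p / (p + 1) * (p + 1)) with p by (field; lra).
  rewrite Rpower_1 by lra. reflexivity.
Qed.

Lemma threshold_le N p : 0 < p -> threshold N p <= 2 * Rpower N (p / (p + 1)).
Proof.
  intros Hp. unfold threshold. pose proof (Rpower_pos N (p / (p + 1))).
  assert (Rpower 2 (/ (p + 1)) <= 2).
  { rewrite <- (Rpower_1 2) at 2 by lra. apply Rle_Rpower; [lra|].
    rewrite <- Rinv_1. apply Rinv_le_contravar; lra. }
  nra.
Qed.

Lemma welfare_sum_bound n alpha p T (Y X K : nat -> R) :
  0 < INR n -> 0 < alpha -> 0 <= p -> 0 < T -> Rpower T p * T = 2 * Rpower (INR n) p ->
  (forall a, (a < n)%nat -> 0 <= Y a <= 1) ->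
  (forall a, (a < n)%nat -> 0 <= K a) ->
  (forall a, (a < n)%nat -> Y a <= K a * (alpha * X a)) ->
  (forall a, (a < n)%nat -> 1 <= INR n * (alpha * X a)) ->
  Rsum n K <= 2 * INR n ->
  Rsum n (fun a => rpow (Y a) p) <= 2 * Rpower (alpha * T) p * Rsum n (fun a => rpow (X a) p).
Proof.
  intros HN Ha Hp HT HTp HY HK HYK HX HsK.
  set (S := Rsum n (fun a => rpow (X a) p)).
  assert (Hsplit : Rsum n (fun a => rpow (Y a) p) <= Rpower (alpha * T) p * S + Rsum n K * / T).
  { apply Rle_trans with (Rsum n (fun a => rpow (X a) p * Rpower (alpha * T) p + K a * / T)).
    - apply Rsum_le; intros a Ha'. specialize (HX a Ha').
      assert (HXa : 0 < X a) by (assert (0 < INR n * alpha) by nra; nra).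
      rewrite (rpow_of_pos (X a)) by lra.
      pose proof (threshold_split alpha T p (X a) (Y a) (K a) Ha HT Hp
                    HXa (HY a Ha') (HK a Ha') (HYK a Ha')).
      unfold Rdiv in *. lra.
    - rewrite Rsum_plus, !Rsum_scal. unfold S. lra. }
  assert (Hlow : INR n <= Rpower (INR n * alpha) p * S)
    by (apply Rsum_rpow_lower; auto; [nra | intros; rewrite Rmult_assoc; auto]).
  assert (HinvT : 0 < / T) by (apply Rinv_0_lt_compat; lra).
  assert (HKT : Rsum n K * / T <= Rpower (alpha * T) p * S).
  { apply Rle_trans with (2 * (Rpower (INR n * alpha) p * S) * / T);
      [apply Rmult_le_compat_r; lra|].
    rewrite <- !Rpower_mult_distr by lra.
    replace (2 * (Rpower (INR n) p * Rpower alpha p * S) * / T)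
      with (Rpower alpha p * S * (2 * Rpower (INR n) p) * / T) by ring.
    rewrite <- HTp. right. field. lra. }
  lra.
Qed.

Lemma root_of_mean_bound alpha T m rho A B :
  0 < alpha -> 0 < T -> T <= 2 * m -> 0 < rho -> 0 <= A -> 0 < B ->
  A <= 2 * Rpower (alpha * T) rho * B ->
  rpow A (/ rho) <= 2 * alpha * Rpower 2 (/ rho) * m * rpow B (/ rho).
Proof.
  intros Ha HT HTm Hp HA HB HAB.
  pose proof (Rpower_pos (alpha * T) rho).
  eapply Rle_trans.
  { apply (rpow_le_scaled _ _ _ _ HA HAB); try apply Rlt_le, Rinv_0_lt_compat; lra. }
  rewrite <- Rpower_mult_distr, Rpower_root, (rpow_of_pos B) by (nra || lra).
  assert (Hfactor : 0 < Rpower 2 (/ rho) * alpha * Rpower B (/ rho))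
    by (repeat apply Rmult_lt_0_compat; try apply Rpower_pos; lra).
  replace (2 * alpha * Rpower 2 (/ rho) * m * Rpower B (/ rho))
    with (Rpower 2 (/ rho) * alpha * Rpower B (/ rho) * (2 * m)) by ring.
  replace (Rpower 2 (/ rho) * (alpha * T) * Rpower B (/ rho))
    with (Rpower 2 (/ rho) * alpha * Rpower B (/ rho) * T) by ring.
  apply Rmult_le_compat_l; lra.
Qed.

Lemma welfare_mean_bound n alpha rho (Y X K : nat -> R) :
  (1 <= n)%nat -> 0 < alpha -> 0 < rho ->
  (forall a, (a < n)%nat -> 0 <= Y a <= 1) ->
  (forall a, (a < n)%nat -> 0 <= K a) ->
  (forall a, (a < n)%nat -> Y a <= K a * (alpha * X a)) ->
  (forall a, (a < n)%nat -> 1 <= INR n * (alpha * X a)) ->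
  Rsum n K <= 2 * INR n ->
  rpow (/ INR n * Rsum n (fun a => rpow (Y a) rho)) (/ rho) <=
  2 * alpha * Rpower 2 (/ rho) * Rpower (INR n) (rho / (rho + 1)) *
  rpow (/ INR n * Rsum n (fun a => rpow (X a) rho)) (/ rho).
Proof.
  intros Hn Ha Hp HY HK HYK HX HsK.
  assert (HN : 1 <= INR n) by (apply (le_INR 1); auto).
  assert (HinvN : 0 < / INR n) by (apply Rinv_0_lt_compat; lra).
  set (T := threshold (INR n) rho).
  set (S := Rsum n (fun a => rpow (X a) rho)).
  assert (HS : 0 < S).
  { pose proof (Rpower_pos (INR n * alpha) rho).
    assert (INR n <= Rpower (INR n * alpha) rho * S)
      by (apply Rsum_rpow_lower; [nra | lra | intros; rewrite Rmult_assoc; auto]).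
    nra. }
  assert (Hsum : Rsum n (fun a => rpow (Y a) rho) <= 2 * Rpower (alpha * T) rho * S)
    by (apply welfare_sum_bound with K; auto; try lra;
        [apply threshold_pos | apply threshold_power; lra]).
  assert (Hsum_nn : 0 <= Rsum n (fun a => rpow (Y a) rho))
    by (apply Rsum_nonneg; intros; apply rpow_nonneg).
  assert (HT : 0 < T) by apply threshold_pos.
  assert (HTle : T <= 2 * Rpower (INR n) (rho / (rho + 1))) by (apply threshold_le; lra).
  apply root_of_mean_bound with T; auto; nra.
Qed.

Theorem theorem9 (n : nat) (Hn : (1 <= n)%nat)
  (v : nat -> R -> R -> R) (Hv : forall a, (a < n)%nat -> is_valuation (v a))
  (alpha : R) (Halpha : 1 <= alpha)
  (I : nat -> R * R) (HI : is_allocation n I) (HEF : alpha_EF n v alpha I)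
  (rho : R) (Hrho : 0 < rho <= 1)
  (Istar : nat -> R * R) (HIstar : is_allocation n Istar) :
  Mrho n v rho Istar <=
    2 * alpha * Rpower 2 (/ rho) * Rpower (INR n) (rho / (rho + 1)) * Mrho n v rho I.
Proof.
  assert (Halpha_pos : 0 < alpha) by lra.
  unfold Mrho.
  apply (welfare_mean_bound n alpha rho
           (fun a => val v a (Istar a)) (fun a => val v a (I a))
           (fun a => Rsum n (fun b => overlap (Istar a) (I b)))); try lra; auto.
  - intros a Ha. apply w_le_1; [apply Hv | apply HIstar]; auto.
  - intros a Ha. apply Rsum_nonneg. intros b Hb. unfold overlap; destruct Rlt_dec; lra.
  - intros a Ha. apply EF_overlap_bound; auto.
  - intros a Ha. apply EF_lower_bound; auto.
  - apply overlap_count; auto.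
Qed.
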